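(* On an $n$-node, $m$-edge undirected input graph with positive edge weights and any $0<\epsilon<1$, the construction described in the context runs in $\widetilde{O}(mn^{3/5})$ time with high probability.
   Context: Let $\mu=\lceil n^{2/5}\log^{1/5}n\rceil$, let $w:E\to\mathbb{R}^+$ be the edge weights and $W=\max_{e\in E}w(e)$. $\Gamma_{H_0}(x)$ is $x$ together with its neighbors in $H_0$. A $\mu$-lightweight initialization of $G$ is the subgraph obtained by selecting, for every node, its $\mu$ lightest incident edges (all of them if it has fewer), ties broken arbitrarily. Construction: (1) Let $H_0=(V,E')$ be a $\mu$-lightweight initialization of $G$. (2) Sample $S_2$ by including each node independently with probability $1/\mu$; for each node $x$ with $(\{x\}\cup\Gamma_{H_0}(x))\cap S_2=\varnothing$, add all edges incident to $x$ to $E'$. (3) Sample $S_1$ by including each node independently with probability $9\mu/n$; for each $x\in S_1$ add to $E'$ the edges of a shortest-path tree of $G$ rooted at $x$ spanning $V$ (computed by Dijkstra's algorithm). (4) For each $x_1\in S_2$, with $g=\mu^3/n+2$ and gray edges $E\setminus E'$ (the current $E'$), set $w'(e)=w(e)+\epsilon W g^{-1}$ for gray edges and $w'(e)=w(e)$ otherwise, run Dijkstra's algorithm (with Fibonacci heaps) from $x_1$ under $w'$ to obtain minimum-$w'$-weight paths $P(x_1,x_2)$, and add the edges of $P(x_1,x_2)$ to $E'$ for every $x_2\in S_2$. Output $H=(V,E')$. $\widetilde{O}$ hides polylogarithmic factors; ''with high probability'' means with probability at least $1-1/n^c$ for some constant $c>0$. *)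

From HB Require Import structures.
From mathcomp Require Import all_boot all_order all_algebra.
From mathcomp Require Import all_classical all_reals all_analysis.
Set Implicit Arguments. Unset Strict Implicit. Unset Printing Implicit Defensive.
Import Order.TTheory GRing.Theory Num.Theory.
Local Open Scope ring_scope.

(* A cost-counting (writer) monad: a computation returns a value and   *)
(* the number of elementary operations it performed.                   *)
Definition CM (A : Type) := (A * nat)%type.
Definition ret {A : Type} (a : A) : CM A := (a, 0%N).
Definition bind {A B : Type} (m : CM A) (f : A -> CM B) : CM B :=
  let: (a, c) := m in let: (b, d) := f a in (b, (c + d)%N).
Definition tick (k : nat) : CM unit := (tt, k).
Definition cost {A : Type} (m : CM A) : nat := m.2.
Definition value {A : Type} (m : CM A) : A := m.1.

Fixpoint foldM {A B : Type} (f : B -> A -> CM B) (s : seq A) (b : B) : CM B :=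
  match s with
  | [::] => ret b
  | x :: s' => bind (tick 1) (fun _ => bind (f b x) (foldM f s'))
  end.

(* Graphs: nodes 'I_n, an undirected edge is a 2-element set of nodes. *)
Notation edge n := {set 'I_n}.
Notation graph n := {set {set 'I_n}}.

Definition simple_graph (n : nat) (E : graph n) : Prop :=
  forall e, e \in E -> #|e| = 2%N.

Definition adjrel (n : nat) (E : graph n) : rel 'I_n :=
  fun x y => [set x; y] \in E.

Definition connected_graph (n : nat) (E : graph n) : Prop :=
  forall x y : 'I_n, connect (adjrel E) x y.

Definition adj (n : nat) (E : graph n) (x : 'I_n) : seq (edge n) :=
  seq.filter (fun e : {set 'I_n} => x \in e) (enum E).

Definition mu (R : realType) (n : nat) : nat :=
  `| Num.ceil ((n%:R : R) `^ (2 / 5) * (ln (n%:R : R)) `^ (1 / 5)) |%N.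

(* A (Dijkstra) shortest-path-tree procedure: given edge weights and a  *)
(* source it returns parent pointers, with its operation count.         *)
Definition sp_oracle (R : realType) (n : nat) :=
  (edge n -> R) -> 'I_n -> CM {ffun 'I_n -> option 'I_n}.

(* Cost bound of Dijkstra's algorithm with Fibonacci heaps:             *)
(* O(m + n log n) on the input graph, for positive weights.             *)
Definition dijkstra_cost_bound (R : realType) (n : nat) (E : graph n)
    (K : nat) (dij : sp_oracle R n) : Prop :=
  forall (w' : edge n -> R) (s : 'I_n), (forall e, e \in E -> 0 < w' e) ->
    (cost (dij w' s) <= K * (#|E| + n * (up_log 2 n).+1))%N.

Section Construction.
Variables (R : realType) (n : nat) (E : graph n) (w : edge n -> R)
          (eps : R) (dij : sp_oracle R n).

Definition add_edges (s : seq (edge n)) (H : graph n) : CM (graph n) :=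
  foldM (fun H' e => ret (e |: H')) s H.

(* (1) mu-lightweight initialization: sort each incidence list by weight *)
(* (comparison sort: size * log size operations), keep the mu lightest.   *)
Definition step1 : CM (graph n) :=
  foldM (fun H x =>
           let s := adj E x in
           bind (tick (size s * (up_log 2 (size s)).+1))
             (fun _ => add_edges (take (mu R n) (sort (fun e f => w e <= w f) s)) H))
        (enum 'I_n) finset.set0.

Definition step2 (H0 : graph n) (S2 : {set 'I_n}) : CM (graph n) :=
  foldM (fun H x =>
           bind (foldM (fun b e => ret (b || ((e \in H0) && [exists y in e, y \in S2])))
                       (adj E x) (x \in S2))
             (fun hit => if hit then ret H else add_edges (adj E x) H))
        (enum 'I_n) H0.

Definition tree_edges (par : {ffun 'I_n -> option 'I_n}) (H : graph n) : CM (graph n) :=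
  foldM (fun H' v => ret (if par v is Some u then [set u; v] |: H' else H'))
        (enum 'I_n) H.

Definition step3 (S1 : {set 'I_n}) (H : graph n) : CM (graph n) :=
  foldM (fun H' x => bind (dij w x) (fun par => tree_edges par H')) (enum S1) H.

Fixpoint walk (par : {ffun 'I_n -> option 'I_n}) (fuel : nat) (v : 'I_n)
    (st : {set 'I_n} * graph n) : CM ({set 'I_n} * graph n) :=
  match fuel with
  | 0 => ret st
  | fuel'.+1 =>
      if v \in st.1 then ret st else
      match par v with
      | None => ret st
      | Some u => bind (tick 1) (fun _ =>
                    walk par fuel' u (v |: st.1, [set u; v] |: st.2))
      end
  end.

Definition step4 (S2 : {set 'I_n}) (H : graph n) : CM (graph n) :=
  bind (tick #|E|) (fun _ =>
  let W := \big[Num.max/0]_(e in E) w e in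
  let g := ((mu R n)%:R ^+ 3 / n%:R + 2 : R) in
  foldM (fun H' x1 =>
           bind (tick #|E|) (fun _ =>
           let w' := fun e => if e \in E :\: H' then w e + eps * W / g else w e in
           bind (dij w' x1) (fun par =>
           bind (foldM (fun st x2 => walk par n x2 st) (enum S2) ([set x1], H'))
                (fun st => ret st.2))))
        (enum S2) H).

(* the whole construction, on random samples S1, S2; the initial tick    *)
(* accounts for reading the input / building incidence lists.            *)
Definition construction (S1 S2 : {set 'I_n}) : CM (graph n) :=
  bind (tick (n + #|E|)) (fun _ =>
  bind step1 (fun H0 =>
  bind (step2 H0 S2) (fun H1 =>
  bind (step3 S1 H1) (fun H2 =>
  step4 S2 H2)))).

End Construction.

(* Randomness: each node independently in S with probability p.        *)
Definition bern_set (R : realType) (n : nat) (p : R) (S : {set 'I_n}) : R :=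
  p ^+ #|S| * (1 - p) ^+ (n - #|S|).

Definition prob2 (R : realType) (n : nat) (p1 p2 : R)
    (P : {set 'I_n} -> {set 'I_n} -> bool) : R :=
  \sum_(S1 : {set 'I_n}) \sum_(S2 : {set 'I_n})
     bern_set p1 S1 * bern_set p2 S2 * (P S1 S2)%:R.

Definition p1_of (R : realType) (n : nat) : R := Num.min 1 (9 * (mu R n)%:R / n%:R).
Definition p2_of (R : realType) (n : nat) : R := 1 / (mu R n)%:R.

From HB Require Import structures.
From mathcomp Require Import all_boot all_order all_algebra.
From mathcomp Require Import all_classical all_reals all_analysis.
From mathcomp Require Import ring lra zify.
Import Order.TTheory GRing.Theory Num.Theory.
Local Open Scope ring_scope.

Set Implicit Arguments. Unset Strict Implicit. Unset Printing Implicit Defensive.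

(* In the cost model, the lightweight initialization and step (2) cost
   O(m log n), every node of S1 costs one Dijkstra run plus a tree, and every
   node of S2 costs one Dijkstra run plus parent-pointer walks that mark each
   node at most once; so the construction costs O(K (1 + |S1| + |S2|) m log n).
   The sizes |S1| and |S2| are binomial with means n p1 >= n^(2/5) and
   n p2 = n / mu, so by Chebyshev each exceeds twice its mean with probability
   at most the inverse of that mean, and both failure probabilities together
   are below n^(-1/5). Outside these events 1 + |S1| + |S2| <= 39 n^(3/5) ln n,
   since 18 mu = O(n^(2/5) ln n) and 2 n / mu <= 2 n^(3/5). *)

Section BinomialTail.
Variables (R : realType) (p : R).

Lemma binomial_pmfE n k :
  binomial_pmf n p k = 'C(n, k)%:R * (p ^+ k * (1 - p) ^+ (n - k)).
Proof. by rewrite mulr_natl. Qed.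

Lemma binomial_pmf_sum1 n : \sum_(k < n.+1) binomial_pmf n p k = 1.
Proof.
have -> : 1 = (1 - p + p) ^+ n by rewrite subrK expr1n.
by rewrite exprDn; apply: eq_bigr => k _; rewrite binomial_pmfE mulr_natl mulrC.
Qed.

Lemma binomial_pmf_shift n (g : nat -> R) :
  \sum_(k < n.+2) k%:R * binomial_pmf n.+1 p k * g k =
  n.+1%:R * p * \sum_(k < n.+1) binomial_pmf n p k * g k.+1.
Proof.
rewrite big_ord_recl !mul0r add0r mulr_sumr; apply: eq_bigr => k _.
rewrite !binomial_pmfE (_ : lift ord0 k = k.+1 :> nat) // subSS exprS.
have /(congr1 (fun m => m%:R : R)) := mul_bin_diag n.+1 k; rewrite !natrM.
move: ('C(n.+1, k.+1)) ('C(n, k)) => c1 c0 diag.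
transitivity (p * p ^+ k * (1 - p) ^+ (n - k) * g k.+1 * (k.+1%:R * c1%:R)); first by ring.
by rewrite -diag; ring.
Qed.

Lemma binomial_mean n : \sum_(k < n.+1) k%:R * binomial_pmf n p k = n%:R * p.
Proof.
case: n => [|n]; first by rewrite big_ord1 !mul0r.
under eq_bigr do rewrite -[_ * _]mulr1.
by rewrite (binomial_pmf_shift n (fun=> 1)); under eq_bigr do rewrite mulr1;
  rewrite binomial_pmf_sum1 mulr1.
Qed.

Lemma binomial_factorial_moment2 n :
  \sum_(k < n.+1) k%:R * (k%:R - 1) * binomial_pmf n p k = n%:R * (n%:R - 1) * p ^+ 2.
Proof.
case: n => [|n]; first by rewrite big_ord1 !mul0r.
under eq_bigr do rewrite mulrAC.
rewrite (binomial_pmf_shift n (fun k => k%:R - 1)).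
under eq_bigr do rewrite -[_.+1%:R]natr1 addrK mulrC.
rewrite binomial_mean -[n.+1%:R]natr1 addrK; ring.
Qed.

Lemma binomial_variance n :
  \sum_(k < n.+1) (k%:R - n%:R * p) ^+ 2 * binomial_pmf n p k = n%:R * p * (1 - p).
Proof.
transitivity (\sum_(k < n.+1) (k%:R * (k%:R - 1) * binomial_pmf n p k
   + (1 - 2 * n%:R * p) * (k%:R * binomial_pmf n p k)
   + (n%:R * p) ^+ 2 * binomial_pmf n p k)).
  by apply: eq_bigr => k _; ring.
rewrite !big_split /= -!mulr_sumr binomial_factorial_moment2 binomial_mean.
rewrite binomial_pmf_sum1; ring.
Qed.

(* Chebyshev's inequality, with deviation [n p] from the mean *)
Lemma binomial_upper_tail n : 0 < p <= 1 -> (0 < n)%N ->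
  \sum_(k < n.+1) binomial_pmf n p k * ((2 * n%:R * p <= k%:R)%R)%:R <= (n%:R * p)^-1.
Proof.
move=> /andP[p_gt0 p_le1] n_gt0.
have np_gt0 : 0 < n%:R * p by rewrite mulr_gt0 ?ltr0n.
apply: le_trans (_ : \sum_(k < n.+1)
    (k%:R - n%:R * p) ^+ 2 * binomial_pmf n p k / (n%:R * p) ^+ 2 <= _).
  apply: ler_sum => k _.
  have pmf_ge0 : 0 <= binomial_pmf n p k by apply: binomial_pmf_ge0; rewrite ltW.
  have dev_ge0 : 0 <= (k%:R - n%:R * p) ^+ 2 * binomial_pmf n p k / (n%:R * p) ^+ 2.
    by apply: divr_ge0; [apply: mulr_ge0 | ]; rewrite ?sqr_ge0.
  have [far|_] := boolP (2 * n%:R * p <= k%:R); last by rewrite mulr0n mulr0.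
  rewrite mulr1n mulr1 mulrAC ler_peMl //.
  by rewrite ler_pdivlMr ?exprn_gt0 // mul1r ler_sqr ?nnegrE; lra.
rewrite -mulr_suml binomial_variance ler_pdivrMr ?exprn_gt0 // expr2 mulKf ?gt_eqF //.
by rewrite ler_piMr ?ltW //; lra.
Qed.

End BinomialTail.

Lemma card_le_ord n (A : {pred 'I_n}) : (#|A| <= n)%N.
Proof. by rewrite -[X in (_ <= X)%N]card_ord max_card. Qed.

Lemma sum_subsets_by_card (R : pzSemiRingType) n (F : nat -> R) :
  \sum_(S : {set 'I_n}) F #|S| = \sum_(k < n.+1) 'C(n, k)%:R * F k.
Proof.
have card_lt (S : {set 'I_n}) : (#|S| < n.+1)%N by rewrite ltnS card_le_ord.
rewrite (partition_big (fun S : {set 'I_n} => inord #|S| : 'I_n.+1) predT) //=.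
apply: eq_bigr => k _.
transitivity (\sum_(S in [set A : {set 'I_n} | #|A| == k]) F k).
  apply: eq_big => [S|S /eqP <-]; last by rewrite inordK.
  by rewrite inE -(inj_eq val_inj) /= inordK.
by rewrite sumr_const card_draws card_ord mulr_natl.
Qed.

Section BernoulliSample.
Variables (R : realType) (n : nat) (p : R).

Lemma bern_set_ge0 (S : {set 'I_n}) : 0 <= p <= 1 -> 0 <= bern_set p S.
Proof. by move=> /andP[p_ge0 p_le1]; rewrite mulr_ge0 ?exprn_ge0 ?subr_ge0. Qed.

Lemma bern_set_sum1 : \sum_(S : {set 'I_n}) bern_set p S = 1.
Proof.
rewrite (sum_subsets_by_card n (fun k => p ^+ k * (1 - p) ^+ (n - k))).
by rewrite -[RHS](binomial_pmf_sum1 p n); apply: eq_bigr => k _; rewrite binomial_pmfE.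
Qed.

Lemma bern_set_card_tail : 0 < p <= 1 -> (0 < n)%N ->
  \sum_(S : {set 'I_n}) bern_set p S * ((2 * n%:R * p <= #|S|%:R)%R)%:R <= (n%:R * p)^-1.
Proof.
move=> p01 n_gt0; apply: le_trans (binomial_upper_tail p01 n_gt0).
rewrite (sum_subsets_by_card n
  (fun k => p ^+ k * (1 - p) ^+ (n - k) * ((2 * n%:R * p <= k%:R)%R)%:R)).
by under eq_bigr do rewrite mulrA -binomial_pmfE.
Qed.

End BernoulliSample.

Lemma prob2_ge_union_bound (R : realType) n (p1 p2 : R) (A1 A2 : pred {set 'I_n})
    (P : {set 'I_n} -> {set 'I_n} -> bool) :
  0 <= p1 <= 1 -> 0 <= p2 <= 1 ->
  (forall S1 S2, ~~ A1 S1 -> ~~ A2 S2 -> P S1 S2) ->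
  1 - \sum_(S : {set 'I_n}) bern_set p1 S * (A1 S)%:R
    - \sum_(S : {set 'I_n}) bern_set p2 S * (A2 S)%:R <= prob2 p1 p2 P.
Proof.
move=> p1_01 p2_01 outside.
set T2 := \sum_(S : {set 'I_n}) _ * (A2 S)%:R.
have -> : 1 - \sum_(S : {set 'I_n}) bern_set p1 S * (A1 S)%:R - T2 =
    \sum_(S1 : {set 'I_n}) \sum_(S2 : {set 'I_n})
      bern_set p1 S1 * bern_set p2 S2 * (1 - (A1 S1)%:R - (A2 S2)%:R).
  transitivity (\sum_(S1 : {set 'I_n})
      (bern_set p1 S1 - bern_set p1 S1 * (A1 S1)%:R - bern_set p1 S1 * T2)).
    by rewrite !sumrB -mulr_suml bern_set_sum1 mul1r.
  apply: eq_bigr => S1 _.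
  rewrite (eq_bigr (fun S2 => bern_set p1 S1 * bern_set p2 S2
      - bern_set p1 S1 * (A1 S1)%:R * bern_set p2 S2
      - bern_set p1 S1 * (bern_set p2 S2 * (A2 S2)%:R))); last by move=> S2 _; ring.
  by rewrite !sumrB -!mulr_sumr bern_set_sum1 !mulr1.
apply: ler_sum => S1 _; apply: ler_sum => S2 _.
apply: ler_wpM2l; first by rewrite mulr_ge0 ?bern_set_ge0.
have P_ge0 : 0 <= (P S1 S2)%:R :> R := ler0n _ _.
case: (A1 S1) (A2 S2) (outside S1 S2) => [] [] /= => [_|_|_|-> //];
  rewrite ?mulr1n ?mulr0n; lra.
Qed.

Lemma cost_bind A B (m : CM A) (f : A -> CM B) :
  cost (bind m f) = (cost m + cost (f (value m)))%N.
Proof. by case: m => a c; rewrite /bind; case: (f a). Qed.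

Lemma value_bind A B (m : CM A) (f : A -> CM B) : value (bind m f) = value (f (value m)).
Proof. by case: m => a c; rewrite /bind; case: (f a). Qed.

Lemma cost_tick k : cost (tick k) = k.
Proof. by []. Qed.

Lemma foldM_cons A B (f : B -> A -> CM B) x s b :
  foldM f (x :: s) b = bind (tick 1) (fun=> bind (f b x) (foldM f s)).
Proof. by []. Qed.

Lemma cost_foldM_le A B (f : B -> A -> CM B) (c : A -> nat) s b :
  (forall b x, (cost (f b x) <= c x)%N) ->
  (cost (foldM f s b) <= \sum_(x <- s) (c x).+1)%N.
Proof.
move=> f_le; elim: s b => [|x s IHs] b; first by rewrite big_nil.
rewrite foldM_cons big_cons !cost_bind /cost /=.
by have := f_le b x; have := IHs (value (f b x)); rewrite /cost; lia.
Qed.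

Lemma cost_foldM_potential A B (f : B -> A -> CM B) (phi : B -> nat) s b :
  (forall b x, (cost (f b x) + phi b <= phi (value (f b x)))%N) ->
  (cost (foldM f s b) + phi b <= size s + phi (value (foldM f s b)))%N.
Proof.
move=> f_amortized; elim: s b => [|x s IHs] b; first by rewrite addnC.
rewrite foldM_cons !cost_bind !value_bind /cost /value /=.
have := f_amortized b x; have := IHs (value (f b x)); rewrite /cost /value; lia.
Qed.

Lemma cost_foldM_const A B (f : B -> A -> CM B) (c : nat) s b :
  (forall b x, (cost (f b x) <= c)%N) -> (cost (foldM f s b) <= size s * c.+1)%N.
Proof.
move=> f_le; apply: leq_trans (cost_foldM_le (c := fun=> c) _ _ f_le) _.
by rewrite big_const_seq count_predT iter_addn_0 mulnC.
Qed.

Lemma cost_add_edges n (s : seq (edge n)) H : (cost (add_edges s H) <= size s)%N.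
Proof. by rewrite -[X in (_ <= X)%N]muln1; apply: cost_foldM_const. Qed.

(* Every unit of cost marks a new node, so the number of marked nodes is a potential. *)
Lemma cost_walk n (par : {ffun 'I_n -> option 'I_n}) fuel v st :
  (cost (walk par fuel v st) + #|st.1| <= #|(value (walk par fuel v st)).1|)%N.
Proof.
elim: fuel v st => [|fuel IHfuel] v st //=.
case: ifP => // v_unmarked; case: (par v) => [u|] //.
have := IHfuel u (v |: st.1, [set u; v] |: st.2).
case: (walk par fuel u _) => st' c /=.
rewrite cardsU1 v_unmarked /cost /value /=; lia.
Qed.

Definition deg n (E : graph n) (x : 'I_n) : nat := size (adj E x).

Lemma sum_deg n (E : graph n) : simple_graph E ->
  (\sum_(x <- enum 'I_n) deg E x = 2 * #|E|)%N.
Proof.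
move=> E_simple; rewrite big_enum /=.
transitivity (\sum_(x : 'I_n) \sum_(e in E) (x \in e : nat))%N.
  apply: eq_bigr => x _; rewrite /deg /adj size_filter -sum1_count big_enum_cond big_mkcondr.
  by apply: eq_bigr => e _; case: (x \in e).
rewrite exchange_big (eq_bigr (fun=> 2%N)) ?sum_nat_const 1?mulnC // => e e_in.
rewrite -(E_simple e e_in) -sum1_card [RHS]big_mkcond.
by apply: eq_bigr => x _; case: (x \in e).
Qed.

Lemma deg_le_card_edges n (E : graph n) x : (deg E x <= #|E|)%N.
Proof. by rewrite /deg /adj size_filter cardE count_size. Qed.

Lemma deg_gt0 n (E : graph n) x : (1 < n)%N -> connected_graph E -> (0 < deg E x)%N.
Proof.
move=> n_gt1 E_conn.
have [y y_neq_x] : exists y : 'I_n, y != x.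
  have [->|x_neq0] := eqVneq x (Ordinal (ltnW n_gt1)).
    by exists (Ordinal n_gt1); rewrite -(inj_eq val_inj).
  by exists (Ordinal (ltnW n_gt1)); rewrite eq_sym.
have /connectP[[|z zs] /=] := E_conn x y.
  by move=> _ y_eq; rewrite y_eq eqxx in y_neq_x.
case/andP => xz _ _; rewrite /deg /adj size_filter -has_count; apply/hasP.
by exists [set x; z]; rewrite ?mem_enum // !inE eqxx.
Qed.

Lemma card_edges_le_sq n (E : graph n) : simple_graph E -> (#|E| <= n * n)%N.
Proof.
move=> E_simple.
have /subset_leq_card : E \subset [set A : {set 'I_n} | #|A| == 2%N].
  by apply/fintype.subsetP => e e_in; rewrite inE E_simple.
rewrite card_draws card_ord bin2 => /leq_trans; apply.
by rewrite leq_half_double -addnn; case: (n) => //= k; nia.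
Qed.

Lemma up_log_card_edges n (E : graph n) : simple_graph E ->
  (up_log 2 #|E| <= 2 * up_log 2 n)%N.
Proof.
move=> E_simple; apply: up_log_min => //; apply: leq_trans (card_edges_le_sq E_simple) _.
by rewrite mulnC expnM leq_mul ?up_logP.
Qed.

Lemma nodes_le_double_edges n (E : graph n) : (1 < n)%N ->
  simple_graph E -> connected_graph E -> (n <= 2 * #|E|)%N.
Proof.
move=> n_gt1 E_simple E_conn.
rewrite -sum_deg // -[n in (n <= _)%N]size_enum_ord -sum1_size.
by apply: leq_sum => x _; apply: deg_gt0.
Qed.

Section ConstructionCost.
Variables (R : realType) (n : nat) (E : graph n) (w : edge n -> R) (eps : R).
Variables (K : nat) (dij : sp_oracle R n).
Hypothesis E_simple : simple_graph E.
Hypothesis w_pos : forall e, e \in E -> 0 < w e.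
Hypothesis eps_ge0 : 0 <= eps.
Hypothesis dij_cost : dijkstra_cost_bound E K dij.

Let dij_budget := (K * (#|E| + n * (up_log 2 n).+1))%N.

Lemma cost_step1 : (cost (step1 E w) <= 2 * #|E| * (up_log 2 #|E|).+2 + n)%N.
Proof.
apply: leq_trans (cost_foldM_le
  (c := fun x => deg E x * (up_log 2 #|E|).+1 + deg E x) _ _ _) _.
  move=> H x; rewrite cost_bind; apply: leq_add.
    by rewrite leq_mul ?ltnS ?leq_up_log ?deg_le_card_edges.
  apply: leq_trans (cost_add_edges _ _) _.
  by rewrite size_take size_sort; case: ifP => // /ltnW.
under eq_bigr do rewrite -addn1.
rewrite !big_split /= -big_distrl /= sum_deg // sum1_size size_enum_ord.
by rewrite (mulnSr _ (up_log 2 _).+1).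
Qed.

Lemma cost_step2 H0 S2 : (cost (step2 E H0 S2) <= 4 * #|E| + n)%N.
Proof.
apply: leq_trans (cost_foldM_le (c := fun x => deg E x + deg E x) _ _ _) _.
  move=> H x; rewrite cost_bind leq_add //; last by case: (value _); rewrite ?cost_add_edges.
  by rewrite -[deg E x]muln1; apply: cost_foldM_const.
under eq_bigr do rewrite -addn1.
by rewrite !big_split /= sum_deg // sum1_size size_enum_ord -mulnDl.
Qed.

Lemma cost_tree_edges par (H : graph n) : (cost (tree_edges par H) <= n)%N.
Proof.
by rewrite -[n in (_ <= n)%N]size_enum_ord -[X in (_ <= X)%N]muln1; apply: cost_foldM_const.
Qed.

Lemma cost_step3 S1 H : (cost (step3 w dij S1 H) <= #|S1| * (dij_budget + n).+1)%N.
Proof.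
rewrite cardE; apply: cost_foldM_const => H' x.
by rewrite cost_bind leq_add ?dij_cost ?cost_tree_edges.
Qed.

Lemma gray_weight_pos (H : graph n) e : e \in E ->
  0 < (if e \in E :\: H then w e + eps * \big[Num.max/0]_(f in E) w f
         / ((mu R n)%:R ^+ 3 / n%:R + 2) else w e).
Proof.
move=> e_in; case: ifP => _; last exact: w_pos.
by rewrite ltr_wpDr ?w_pos ?divr_ge0 ?mulr_ge0 ?bigmax_ge_id ?addr_ge0 ?exprn_ge0.
Qed.

Lemma cost_step4 S2 H :
  (cost (step4 E w eps dij S2 H) <=
     #|E| + #|S2| * (#|E| + dij_budget + (#|S2| + n)).+1)%N.
Proof.
rewrite /step4 cost_bind leq_add // [X in (_ <= X * _)%N]cardE.
apply: cost_foldM_const => H' x1.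
rewrite cost_bind -addnA leq_add // cost_bind; apply: leq_add.
  by apply: dij_cost => e; apply: gray_weight_pos.
rewrite cost_bind /= addn0; move: (value _) => par.
have := cost_foldM_potential (f := fun st x2 => walk par n x2 st)
  (phi := fun st => #|st.1|) (enum S2) ([set x1], H') (fun st x2 => cost_walk par n x2 st).
set F := foldM _ _ _; rewrite -cardE => amortized.
apply: leq_trans (leq_addr _ _) (leq_trans amortized _).
by rewrite leq_add2l card_le_ord.
Qed.

Hypothesis n_gt1 : (1 < n)%N.
Hypothesis E_conn : connected_graph E.

Lemma cost_construction S1 S2 :
  (cost (construction E w eps dij S1 S2) <=
     (3 * K + 20) * (1 + #|S1| + #|S2|) * (#|E| * (up_log 2 n).+1))%N.
Proof.
set L := up_log 2 n; set M := (#|E| * L.+1)%N.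
have n_le : (n <= 2 * #|E|)%N by apply: nodes_le_double_edges.
have M_E : M = (#|E| * L + #|E|)%N by rewrite /M mulnS addnC.
have nL_le : (n * L <= 2 * (#|E| * L))%N by rewrite mulnA leq_mul2r n_le orbT.
have budget_le : (dij_budget <= K * (3 * M))%N.
  by rewrite /dij_budget leq_mul2l -/L mulnS; apply/orP; right; lia.
have step1_le : (cost (step1 E w) <= 10 * M)%N.
  apply: leq_trans cost_step1 _.
  have : (#|E| * up_log 2 #|E| <= 2 * (#|E| * L))%N.
    by rewrite mulnCA leq_mul2l up_log_card_edges ?orbT.
  rewrite !mulnS; lia.
have step2_le : (cost (step2 E (value (step1 E w)) S2) <= 6 * M)%N.
  by apply: leq_trans (cost_step2 _ _) _; lia.
have step3_le : (cost (step3 w dij S1 (value (step2 E (value (step1 E w)) S2)))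
    <= #|S1| * ((3 * K + 3) * M))%N.
  by apply: leq_trans (cost_step3 _ _) _; rewrite leq_mul2l; apply/orP; right; lia.
have step4_le : (cost (step4 E w eps dij S2
      (value (step3 w dij S1 (value (step2 E (value (step1 E w)) S2)))))
    <= M + #|S2| * ((3 * K + 6) * M))%N.
  apply: leq_trans (cost_step4 _ _) _; apply: leq_add; first by lia.
  have S2_le : (#|S2| <= n)%N := card_le_ord S2.
  by rewrite leq_mul2l; apply/orP; right; lia.
rewrite /construction 4!cost_bind cost_tick; lia.
Qed.

End ConstructionCost.

Lemma ln2_ge_half (R : realType) : 1 / 2 <= ln (2 : R).
Proof.
have := @le_ln1Dx R (- (1 / 2)); rewrite (_ : 1 + - (1 / 2) = 2^-1); last by field.
by rewrite lnV ?posrE //; lra.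
Qed.

Lemma up_log2_le_ln (R : realType) n : (1 < n)%N ->
  (up_log 2 n)%:R <= 2 * ln (n%:R : R) + 1.
Proof.
move=> n_gt1; set L := up_log 2 n.
have L_gt0 : (0 < L)%N by rewrite up_log_gt0 n_gt1.
have L_ln2 : (L.-1)%:R * ln 2 <= ln (n%:R : R).
  rewrite mulr_natl -lnXn // -natrX ler_ln ?posrE ?ltr0n ?expn_gt0 ?(ltnW n_gt1) //.
  by rewrite ler_nat ltnW // up_log_gtn.
rewrite -(prednK L_gt0) -natr1.
by have := ln2_ge_half R; have : 0 <= (L.-1)%:R :> R by []; nra.
Qed.

Lemma powR_natdiv_root (R : realType) (a : R) (k m : nat) : 0 <= a ->
  a `^ (m%:R / k%:R) = (a `^ (1 / k%:R)) ^+ m.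
Proof. by move=> a_ge0; rewrite -powR_mulrn ?powR_ge0 // -powRrM mulrC mul1r. Qed.

Section LargeInput.
Variables (R : realType) (n : nat).
Hypothesis n_large : (3 ^ 10 <= n)%N.

(* The threshold [3 ^ 10] makes the tenth root [x] of [n] at least 3, which is
   all the numerical estimates below need. *)
Let x : R := n%:R `^ (1 / 10).
Let l : R := ln n%:R.
Let mu_n : R := (mu R n)%:R.

Let n_gt1 : (1 < n)%N. Proof. exact: leq_trans n_large. Qed.
Let n_gt0 : 0 < n%:R :> R. Proof. by rewrite ltr0n ltnW. Qed.

Let pow_x k : n%:R `^ (k%:R / 10) = x ^+ k.
Proof. exact: powR_natdiv_root 10 k (ler0n _ _). Qed.

Let x_pow10 : x ^+ 10 = n%:R.
Proof. by rewrite -pow_x divff ?powRr1. Qed.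

Let x_ge3 : 3 <= x.
Proof.
rewrite -(@ler_pXn2r _ 10) ?nnegrE ?powR_ge0 // x_pow10.
by rewrite (_ : 3 ^+ 10 = (3 ^ 10)%N%:R) ?ler_nat // natrX.
Qed.

Let ln_bounds : 5 <= l <= 10 * x.
Proof.
have x3 := x_ge3; have x_gt0 : 0 < x by lra.
have -> : l = 10 * ln x by rewrite /l -x_pow10 lnXn // mulr_natl.
have := ln_sublinear x_gt0; have := ln2_ge_half R.
have : ln 2 <= ln x by rewrite ler_ln ?posrE //; lra.
lra.
Qed.

Let mu_bounds : x ^+ 4 <= mu_n <= x ^+ 4 * l + 1.
Proof.
have /andP[l_ge5 _] := ln_bounds.
have l_ge1 : 1 <= l by lra.
have root_l : 1 <= l `^ (1 / 5) <= l.
  rewrite ler1_powR ?andbT //; last by lra.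
  by have := @ler_powR _ _ l_ge1 0 (1 / 5); rewrite powRr0; apply; lra.
set y := x ^+ 4 * l `^ (1 / 5).
have x4_ge0 : 0 <= x ^+ 4 by rewrite exprn_ge0 ?powR_ge0.
have y_bounds : x ^+ 4 <= y <= x ^+ 4 * l.
  by case/andP: root_l => ? ?; rewrite /y ler_peMr ?ler_wpM2l.
have -> : mu_n = (Num.ceil y)%:~R.
  rewrite /mu_n /mu -/l (_ : 2 / 5 = 4%:R / 10) ?pow_x; last by field.
  by rewrite natr_absz ger0_norm // ceil_ge0 -/y; case/andP: y_bounds; lra.
by have := ceil_itv y; case/andP: y_bounds; lra.
Qed.

Let x_pow_ge1 k : 1 <= x ^+ k.
Proof. by rewrite exprn_ege1 //; have := x_ge3; lra. Qed.

Let n_split : n%:R = x ^+ 4 * x ^+ 6.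
Proof. by rewrite -exprD x_pow10. Qed.

Let p1_bounds : 0 < p1_of R n <= 1 /\ x ^+ 4 <= n%:R * p1_of R n <= 9 * mu_n.
Proof.
have /andP[mu_ge _] := mu_bounds; have x4_ge1 := x_pow_ge1 4.
have x6_ge1 := x_pow_ge1 6; have n_eq := n_split; have n_pos := n_gt0.
rewrite /p1_of -/mu_n; case: (leP 1 (9 * mu_n / n%:R)) => [big|small].
  rewrite ler_pdivlMr // mul1r in big.
  by rewrite mulr1 ltr01 lexx; split=> //; apply/andP; split; nra.
have sample_eq : n%:R * (9 * mu_n / n%:R) = 9 * mu_n by rewrite mulrC divfK ?gt_eqF.
rewrite sample_eq lexx ltW // andbT divr_gt0 //; lra.
Qed.

Lemma p1_of_itv : 0 < p1_of R n <= 1.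
Proof. by case: p1_bounds. Qed.

Lemma p2_of_itv : 0 < p2_of R n <= 1.
Proof.
have /andP[mu_ge _] := mu_bounds; have x4_ge1 := x_pow_ge1 4.
have mu_gt0 : 0 < mu_n by lra.
by rewrite /p2_of -/mu_n divr_gt0 ?ler_pdivrMr // mul1r; lra.
Qed.

Lemma inv_sample_means_le :
  (n%:R * p1_of R n)^-1 + (n%:R * p2_of R n)^-1 <= n%:R `^ (- (1 / 5)).
Proof.
have [_ /andP[np1_ge _]] := p1_bounds; have /andP[_ mu_le] := mu_bounds.
have /andP[_ l_le] := ln_bounds; have x3 := x_ge3; have x_gt0 : 0 < x by lra.
have x4_gt0 : 0 < x ^+ 4 by rewrite exprn_gt0.
have mu_le' : mu_n <= 10 * x ^+ 5 + 1.
  have : x ^+ 4 * l <= x ^+ 4 * (10 * x) by apply: ler_wpM2l; [exact: ltW | lra].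
  by rewrite [x ^+ 5]exprS; lra.
rewrite powRN (_ : 1 / 5 = 2%:R / 10) ?pow_x; last by field.
have -> : (n%:R * p2_of R n)^-1 = mu_n / x ^+ 10.
  by rewrite x_pow10 /p2_of div1r invfM invrK mulrC.
apply: le_trans (lerD (_ : _ <= (x ^+ 4)^-1) (lexx _)) _.
  by rewrite lef_pV2 ?posrE //; lra.
have -> : (x ^+ 4)^-1 + mu_n / x ^+ 10 = (x ^+ 6 + mu_n) / x ^+ 10.
  by field; rewrite gt_eqF.
have -> : (x ^+ 2)^-1 = x ^+ 8 / x ^+ 10 by field; rewrite gt_eqF.
rewrite ler_pM2r ?invr_gt0 ?exprn_gt0 //.
have u_ge1 := x_pow_ge1 5; set u := x ^+ 5 in mu_le' u_ge1 *.
have -> : x ^+ 6 = x * u by rewrite /u -exprS.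
have -> : x ^+ 8 = x ^+ 3 * u by rewrite /u -exprD.
have x2_ge9 : 9 <= x * x by nra.
have c_ge : 9 * x <= x ^+ 3 by rewrite exprS expr2; nra.
have c_ge27 : 27 <= x ^+ 3 by lra.
nra.
Qed.

Lemma sample_cost_factor_le (s1 s2 : nat) :
  s1%:R < 2 * n%:R * p1_of R n -> s2%:R < 2 * n%:R * p2_of R n ->
  ((1 + s1 + s2) * (up_log 2 n).+1)%:R <=
    156 * (n%:R : R) `^ (3 / 5) * ln (n%:R : R) ^+ 2.
Proof.
move=> s1_lt s2_lt.
have [_ /andP[_ np1_le]] := p1_bounds; have /andP[mu_ge mu_le] := mu_bounds.
have /andP[l_ge5 _] := ln_bounds; have x4_ge1 := x_pow_ge1 4.
have x6_eq : x ^+ 6 = x ^+ 4 * x ^+ 2 by rewrite -exprD.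
have x4_le6 : x ^+ 4 <= x ^+ 6 by rewrite x6_eq; have := x_pow_ge1 2; nra.
have np2_le : n%:R * p2_of R n <= x ^+ 6.
  by rewrite /p2_of -/mu_n mulrA mulr1 ler_pdivrMr ?n_split; nra.
have samples_le : (1 + s1 + s2)%:R <= 39 * x ^+ 6 * l by rewrite !natrD; nra.
have logs_le : (up_log 2 n).+1%:R <= 4 * l.
  by have := up_log2_le_ln R n_gt1; rewrite -natr1 -/l; lra.
rewrite natrM (_ : 3 / 5 = 6%:R / 10) ?pow_x; last by field.
apply: le_trans (ler_pM (ler0n _ _) (ler0n _ _) samples_le logs_le) _.
by rewrite -/l; lra.
Qed.

End LargeInput.

Theorem lemma15 (R : realType) (K : nat) :
  exists (C : R) (k : nat) (c : R) (N : nat), 0 < c /\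
  forall (n : nat) (E : graph n) (w : edge n -> R) (eps : R) (dij : sp_oracle R n),
    (N <= n)%N ->
    simple_graph E -> connected_graph E ->
    (forall e, e \in E -> 0 < w e) ->
    0 < eps < 1 ->
    dijkstra_cost_bound E K dij ->
    1 - (n%:R : R) `^ (- c) <=
      prob2 (p1_of R n) (p2_of R n)
        (fun S1 S2 => (cost (construction E w eps dij S1 S2))%:R
                      <= C * #|E|%:R * (n%:R : R) `^ (3 / 5) * (ln (n%:R : R)) ^+ k).
Proof.
exists ((3 * K + 20) * 156)%N%:R, 2%N, (1 / 5), (3 ^ 10)%N; split; first by lra.
move=> n E w eps dij n_large E_simple E_conn w_pos /andP[eps_gt0 _] dij_cost.
have n_gt1 : (1 < n)%N by apply: leq_trans n_large.
have p1_itv := p1_of_itv R n_large; have p2_itv := p2_of_itv R n_large.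
pose large (p : R) (S : {set 'I_n}) : bool := 2 * n%:R * p <= #|S|%:R.
apply: le_trans _
  (prob2_ge_union_bound (A1 := large (p1_of R n)) (A2 := large (p2_of R n)) _ _ _).
- have := bern_set_card_tail p1_itv (ltnW n_gt1).
  have := bern_set_card_tail p2_itv (ltnW n_gt1).
  have := inv_sample_means_le R n_large; rewrite /large; lra.
- by case/andP: p1_itv => /ltW -> ->.
- by case/andP: p2_itv => /ltW -> ->.
move=> S1 S2; rewrite /large -!real_ltNge ?num_real // => S1_small S2_small.
have := cost_construction E_simple w_pos (ltW eps_gt0) dij_cost n_gt1 E_conn S1 S2.
rewrite -(ler_nat R) => /le_trans; apply.
rewrite (_ : (_ * _ * _ = (3 * K + 20) * #|E| * ((1 + #|S1| + #|S2|) * (up_log 2 n).+1))%N);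
  last by lia.
have factor_le := sample_cost_factor_le n_large S1_small S2_small.
by rewrite natrM; apply: le_trans (ler_wpM2l (ler0n _ _) factor_le) _; rewrite !natrM; lra.
Qed.
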